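(* For every finite permutation group $G$, $\mathrm{RC}(G)\le \mathrm{H}(G)+1$.
   Context: Let $G$ act on a finite set $\Omega$. A subset $\Lambda\subseteq\Omega$ is independent if its pointwise stabilizer $G_{(\Lambda)}$ differs from $G_{(\Lambda')}$ for every proper subset $\Lambda'\subsetneq\Lambda$; $\mathrm{H}(G)$ is the maximum size of an independent set. For $r\le n$ and $I,J\in\Omega^n$, write $I\sim_r J$ if for every choice of indices $k_1,\dots,k_r\in\{1,\dots,n\}$ there is $h\in G$ with $I_{k_i}^h=J_{k_i}$ for $i=1,\dots,r$. $\mathrm{RC}(G)$ is the least $r$ such that for all $n\ge r$ and all $I,J\in\Omega^n$, $I\sim_r J$ implies $I\sim_n J$. *)

From mathcomp Require Import all_boot all_fingroup.
Set Implicit Arguments. Unset Strict Implicit. Unset Printing Implicit Defensive.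
Local Open Scope group_scope.

(* G : {group {perm T}} is a permutation group on the finite set Omega = T,
   acting via the natural action 'P (x^h = h x).
   Pointwise stabilizer of L : {set T} in G is 'C_G(L | 'P). *)

Definition independent (T : finType) (G : {group {perm T}}) (L : {set T}) : bool :=
  [forall L' : {set T}, (L' \proper L) ==> ('C_G(L' | 'P) != 'C_G(L | 'P))].

Definition height (T : finType) (G : {group {perm T}}) : nat :=
  \max_(L : {set T} | independent G L) #|L|.

Definition rsim (T : finType) (G : {group {perm T}}) (r n : nat)
    (I J : 'I_n -> T) : Prop :=
  forall k : 'I_r -> 'I_n, exists2 h, h \in G & forall i : 'I_r, h (I (k i)) = J (k i).

Definition rc_prop (T : finType) (G : {group {perm T}}) (r : nat) : Prop :=
  forall n, r <= n -> forall I J : 'I_n -> T, rsim G r I J -> rsim G n I J.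

Definition is_RC (T : finType) (G : {group {perm T}}) (r : nat) : Prop :=
  rc_prop G r /\ forall r', rc_prop G r' -> r <= r'.

From Stdlib Require Import Classical Wf_nat.
From mathcomp Require Import all_boot all_fingroup.
Set Implicit Arguments. Unset Strict Implicit. Unset Printing Implicit Defensive.

(* Let I ~_r J with r > H(G), and let S be the set of entries of I.  S
   contains an independent subset L (a "base" of S) with the same pointwise
   stabilizer as S, so |L| <= H(G) < r; choose a set K of at most |L|
   positions of I whose entries are exactly L.  Applying I ~_r J to the
   positions K, resp. K together with one extra position j, gives h0, hj in G
   mapping I to J on these positions.  Then h0 and hj agree on L, hence on
   all of S, so h0 maps I to J at every position: I ~_n J.  Thus every
   r > H(G) has the RC property, and the least such r (which exists by the
   classical least-number principle) is at most H(G) + 1. *)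

(* Classical least-number principle: a satisfiable predicate on nat has a
   least witness; needed because rc_prop is not decidable. *)
Lemma least_nat_witness (P : nat -> Prop) (m : nat) :
  P m -> exists r, P r /\ forall r', P r' -> r <= r'.
Proof.
move=> Pm; have [r [[Pr minr] _]] :=
  dec_inh_nat_subset_has_unique_least_element P (fun n => classic (P n))
    (ex_intro _ m Pm).
by exists r; split=> // r' /minr /leP.
Qed.

(* Every subset of the image of f is the image of a subset of the domain of
   no larger size: pick one preimage of each point (y0 is a default). *)
Lemma preimage_section (aT rT : finType) (f : aT -> rT) (y0 : aT)
    (L : {set rT}) :
  L \subset f @: setT -> exists K : {set aT}, f @: K = L /\ #|K| <= #|L|.
Proof.
move=> Lf; pose sect x := odflt y0 [pick y | f y == x].
have sectK : {in L, cancel sect f}.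
  move=> x /(subsetP Lf) /imsetP [y _ ->]; rewrite /sect.
  by case: pickP => [y' /eqP //|/(_ y)]; rewrite eqxx.
exists (sect @: L); split; last exact: leq_imset_card.
by rewrite -imset_comp (eq_in_imset sectK) imset_id.
Qed.

Section PointwiseStabilizers.
Local Open Scope group_scope.
Variables (T : finType) (G : {group {perm T}}).

Lemma astab_permP (L : {set T}) (h : {perm T}) :
  reflect (h \in G /\ {in L, forall x, h x = x}) (h \in 'C_G(L | 'P)).
Proof.
rewrite inE; apply: (iffP andP) => [[hG /astabP hL]|[hG hL]]; split => //.
by apply/astabP => x /hL.
Qed.

(* Every set S contains a base: an independent subset with the same pointwise
   stabilizer (take one of minimal size); its size is thus at most H(G). *)
Lemma exists_base (S : {set T}) :
  exists2 L : {set T}, L \subset S /\ 'C_G(L | 'P) = 'C_G(S | 'P) &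
    independent G L.
Proof.
pose base_of_size m := [exists L : {set T},
  [&& L \subset S, 'C_G(L | 'P) == 'C_G(S | 'P) & #|L| == m]].
have : base_of_size #|S| by apply/existsP; exists S; rewrite subxx !eqxx.
move=> /(ex_intro base_of_size) /ex_minnP [m].
move=> /existsP [L /and3P [LS /eqP CL /eqP <-]] minL.
exists L => //; apply/forallP => L'; apply/implyP => ltL'L.
apply/eqP => CL'; have /minL : base_of_size #|L'|.
  apply/existsP; exists L'.
  by rewrite (subset_trans (proper_sub ltL'L) LS) CL' CL !eqxx.
by rewrite leqNgt proper_card.
Qed.

Lemma agree_on_base (L S : {set T}) (g h : {perm T}) :
    'C_G(L | 'P) = 'C_G(S | 'P) -> g \in G -> h \in G ->
  {in L, g =1 h} -> {in S, g =1 h}.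
Proof.
move=> CLS gG hG ghL.
have /astab_permP [_ fixS] : g * h^-1 \in 'C_G(S | 'P).
  rewrite -CLS; apply/astab_permP; split; first by rewrite groupM ?groupV.
  by move=> x Lx; rewrite permM ghL // permK.
by move=> y /fixS; rewrite permM => /(canRL (permKV h)).
Qed.

(* I ~_r J applied to the (at most r) positions listed in a sequence s;
   positions beyond s are padded with the default position j0. *)
Lemma rsim_seq (r n : nat) (I J : 'I_n -> T) (j0 : 'I_n) (s : seq 'I_n) :
    rsim G r I J -> size s <= r ->
  exists2 h, h \in G & {in s, forall j, h (I j) = J j}.
Proof.
move=> IJ le_s_r; have [h hG hIJ] := IJ (fun i => nth j0 s i).
exists h => // j sj; have lt_j_r : index j s < r.
  by apply: leq_trans le_s_r; rewrite index_mem.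
by have := hIJ (Ordinal lt_j_r); rewrite /= nth_index.
Qed.

Lemma rc_prop_above_height (r : nat) : height G < r -> rc_prop G r.
Proof.
move=> lt_H_r n le_r_n I J IJ k.
have j0 : 'I_n.
  by exists 0; apply: leq_trans le_r_n; apply: leq_ltn_trans lt_H_r.
have [L [LS CLS] indL] := exists_base (I @: setT).
have [K [IK cardK]] := preimage_section j0 LS.
have le_K_H : #|K| <= height G.
  by apply: leq_trans cardK _; apply: leq_bigmax_cond.
have sizeK : size (enum K) <= r by rewrite -cardE ltnW ?(leq_ltn_trans le_K_H).
have [h0 h0G h0K] := rsim_seq j0 IJ sizeK.
exists h0 => // i.
have sizeiK : size (k i :: enum K) <= r.
  by rewrite /= -cardE (leq_ltn_trans le_K_H).
have [hi hiG hiK] := rsim_seq j0 IJ sizeiK.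
have h0_hi : {in L, h0 =1 hi}.
  move=> x; rewrite -IK => /imsetP [j jK ->].
  by rewrite h0K ?hiK // ?inE mem_enum jK ?orbT.
rewrite (agree_on_base CLS h0G hiG h0_hi) ?imset_f //.
by apply: hiK; rewrite inE eqxx.
Qed.

End PointwiseStabilizers.

Theorem lemma2p1 (T : finType) (G : {group {perm T}}) :
  exists r, is_RC G r /\ r <= height G + 1.
Proof.
have rcH1 : rc_prop G (height G + 1).
  by apply: rc_prop_above_height; rewrite addn1.
have [r [rcr minr]] := least_nat_witness rcH1.
by exists r; split; last exact: minr.
Qed.
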